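(* There is an absolute constant $C$ such that for every integer $d\ge2$, every $n$, every $t$ and all sets $S_1,\dots,S_t\subseteq[n]$, the function $f\colon\mathbb F_2^n\to\{0,1\}$ defined by $f(x)=1$ if $\big|\{j\in[t]: \exists i\in S_j,\ x_i=1\}\big|\ge d+1$ and $f(x)=0$ otherwise satisfies $R^{lin}_{1/3}(f)\le C d^2\log d$.
   Context: For $S\subseteq[n]$, $\chi_S(x)=\sum_{i\in S}x_i\pmod 2$. Exact randomized $\mathbb F_2$-sketch complexity: for $f\colon\mathbb F_2^n\to\mathbb R$ and $\delta\in[0,1]$, $R^{lin}_\delta(f)$ is the smallest integer $k$ such that there exists a probability distribution over $k$-tuples of subsets $\mathbf S_1,\dots,\mathbf S_k\subseteq[n]$ and a function $g\colon\mathbb F_2^k\to\mathbb R$ with $\Pr_{\mathbf S_1,\dots,\mathbf S_k}[g(\chi_{\mathbf S_1}(x),\dots,\chi_{\mathbf S_k}(x))=f(x)]\ge1-\delta$ for every $x\in\mathbb F_2^n$. *)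

From mathcomp Require Import all_boot.
From Stdlib Require Import Reals.
Set Implicit Arguments. Unset Strict Implicit. Unset Printing Implicit Defensive.

Definition rsum (T : finType) (F : T -> R) : R :=
  List.fold_right (fun x acc => Rplus (F x) acc) 0%R (enum T).

Definition chi (n : nat) (S : {set 'I_n}) (x : {ffun 'I_n -> bool}) : bool :=
  odd #|[set i in S | x i]|.

Definition sketch (n k : nat) (Ss : k.-tuple {set 'I_n}) (x : {ffun 'I_n -> bool})
  : {ffun 'I_k -> bool} := [ffun j => chi (tnth Ss j) x].

Definition lin_sketch (n : nat) (f : {ffun 'I_n -> bool} -> R) (delta : R) (k : nat)
  : Prop :=
  exists (p : k.-tuple {set 'I_n} -> R) (g : {ffun 'I_k -> bool} -> R),
    (forall Ss, (0 <= p Ss)%R) /\ rsum p = 1%R /\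
    forall x : {ffun 'I_n -> bool},
      (1 - delta <= rsum (fun Ss => if Req_EM_T (g (sketch Ss x)) (f x)
                                    then p Ss else 0))%R.

(* R^lin_delta(f) <= b  iff  some k with INR k <= b admits a sketch
   (R^lin_delta(f) is the least such k). *)
Definition Rlin_le (n : nat) (f : {ffun 'I_n -> bool} -> R) (delta b : R) : Prop :=
  exists k : nat, lin_sketch f delta k /\ (INR k <= b)%R.

Definition thr_or (n t d : nat) (S : 'I_t -> {set 'I_n}) (x : {ffun 'I_n -> bool}) : R :=
  if d.+1 <= #|[set j : 'I_t | [exists i in S j, x i]]| then 1%R else 0%R.

(* Hash the t sets into m >= 6(d+1)^2 buckets by a random h : [t] -> [m] and
   draw r random subsets A_(b,1), ..., A_(b,r) of [n] per bucket, where
   2^r >= 6(d+1).  The sketch consists of the m * r parities of x on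
   A_(b,s) :&: U_b, U_b being the union of the sets hashed to b; bucket b is
   lit when one of its parities is odd, and the answer is 1 iff at least d+1
   buckets are lit.

   A lit bucket contains a set hit by x, so the sketch never overcounts
   (lit_buckets_le).  If more than d sets are hit, fix d+1 of them, D; the
   answer is wrong only if two sets of D collide (probability <= (d+1)^2/m,
   collision_count) or the bucket of some set of D is not lit (probability
   <= 2^-r each, miss_count).  Both estimates are instances of an averaging
   argument over bijective shifts of the seed space (shift_count); the union
   bound gives error <= 1/3 (error_third).  Pushing the uniform distribution
   on seeds forward to k-tuples of subsets yields a sketch in the sense of
   lin_sketch (lin_sketch_of_seeds, thr_or_lin_sketch), and r = log2(d+1) + 4
   makes the size 6(d+1)^2 r at most 200 d^2 ln d (sketch_size_bound). *)

From Stdlib Require Import Reals Lra.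
From mathcomp Require Import all_boot.
From mathcomp Require Import ssralg zmodp zify.
Set Implicit Arguments. Unset Strict Implicit. Unset Printing Implicit Defensive.

(* Importing ssralg rebinds the key %R to ring_scope; restore it for reals. *)
Delimit Scope R_scope with R.

(* All the
   probability estimates below are instances of this, written over nat as
   "#|I| * #(bad points) <= #(all points)". *)
Lemma shift_count (T I : finType) (tau : I -> T -> T) (P : pred T) :
  (forall c, injective (tau c)) ->
  (forall w c1 c2, P (tau c1 w) -> P (tau c2 w) -> c1 = c2) ->
  #|I| * \sum_(w : T) (P w : nat) <= #|T|.
Proof.
move=> tau_inj tau_uniq; rewrite -sum_nat_const.
under eq_bigr => c _ do rewrite (reindex_inj (tau_inj c)).
rewrite exchange_big /= -sum1_card; apply: leq_sum => w _.
rewrite -big_mkcondr /= sum1_card.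
apply/card_le1P => c1 Pc1 c2; rewrite inE.
apply/idP/eqP => [Pc2 | ->//]; exact: tau_uniq Pc2 Pc1.
Qed.

Definition hash_seed (X : finType) (t m : nat) : finType :=
  ({ffun 'I_t -> 'I_m} * X)%type.

(* Two fixed indices collide under a uniformly random hash into 'I_m with
   probability at most 1/m: shifting the value at j' by c is a bijection. *)
Lemma collision_count (X : finType) (t m' : nat) (j j' : 'I_t) : j != j' ->
  m'.+1 * \sum_(w : hash_seed X t m'.+1) (w.1 j == w.1 j' : nat)
    <= #|hash_seed X t m'.+1|.
Proof.
move=> neq_jj'.
pose tau (c : 'I_m'.+1) (w : hash_seed X t m'.+1) :=
  ([ffun k => if k == j' then GRing.add (w.1 k) c else w.1 k], w.2).
have := @shift_count _ _ tau (fun w => w.1 j == w.1 j'); rewrite card_ord; apply.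
- move=> c; apply: (can_inj (g := tau (GRing.opp c))) => -[h y].
  congr (_, _); apply/ffunP => k; rewrite !ffunE.
  by case: (k == j'); rewrite ?GRing.addrK.
- move=> [h y] c1 c2; rewrite /tau /= !ffunE eqxx (negbTE neq_jj').
  by move=> /eqP -> /eqP /GRing.addrI.
Qed.

Definition toggle (T : finType) (A : {set T}) (i : T) : {set T} :=
  [set k | (k \in A) (+) (k == i)].

Lemma toggleK (T : finType) (i : T) : involutive (fun A : {set T} => toggle A i).
Proof. by move=> A; apply/setP => k; rewrite !inE addbK. Qed.

Lemma toggleI (T : finType) (A B : {set T}) (i : T) :
  i \in B -> toggle A i :&: B = toggle (A :&: B) i.
Proof.
move=> iB; apply/setP => k; rewrite !inE.
by case: eqP => [->|_]; rewrite ?iB ?addbF ?addbT ?andbT.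
Qed.

Lemma odd_card_toggle (T : finType) (A : {set T}) (i : T) :
  odd #|toggle A i| = ~~ odd #|A|.
Proof.
have sameD1 : toggle A i :\ i = A :\ i.
  by apply/setP => k; rewrite !inE; case: eqP; rewrite ?addbF.
rewrite (cardsD1 i (toggle A i)) (cardsD1 i A) sameD1 inE eqxx addbT.
by case: (i \in A); rewrite /= ?negbK.
Qed.

Lemma chi_toggle n (A : {set 'I_n}) (x : {ffun 'I_n -> bool}) (i : 'I_n) :
  x i -> chi (toggle A i) x = ~~ chi A x.
Proof.
move=> xi; rewrite /chi -(odd_card_toggle _ i).
suff -> : [set k in toggle A i | x k] = toggle [set k in A | x k] i by [].
by apply/setP => k; rewrite !inE; case: eqP => [->|_]; rewrite ?xi ?andbT ?addbF.
Qed.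

Section Buckets.
Variables (n t m : nat) (S : 'I_t -> {set 'I_n}).

Definition bucket (h : {ffun 'I_t -> 'I_m}) (b : 'I_m) : {set 'I_n} :=
  \bigcup_(j | h j == b) S j.

Definition hit_sets (x : {ffun 'I_n -> bool}) : {set 'I_t} :=
  [set j : 'I_t | [exists i in S j, x i]].

Definition seed (r : nat) : finType :=
  hash_seed {ffun 'I_m -> {ffun 'I_r -> {set 'I_n}}} t m.

Definition lit r (x : {ffun 'I_n -> bool}) (w : seed r) (b : 'I_m) : bool :=
  [exists s, chi (w.2 b s :&: bucket w.1 b) x].

Definition lit_buckets r (x : {ffun 'I_n -> bool}) (w : seed r) : {set 'I_m} :=
  [set b | lit x w b].

(* A lit bucket contains a set hit by x, so there are no more lit buckets
   than hit sets: the sketch never overestimates. *)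
Lemma lit_buckets_le r x (w : seed r) : #|lit_buckets x w| <= #|hit_sets x|.
Proof.
apply: leq_trans (leq_imset_card w.1 _); apply/subset_leq_card/subsetP => b.
rewrite inE => /existsP [s /odd_gt0 /card_gt0P [i]].
rewrite !inE => /andP [/andP [_ /bigcupP [j /eqP <- iSj]] xi].
by apply/imsetP; exists j; rewrite // inE; apply/existsP; exists i; rewrite iSj.
Qed.

Lemma lit_buckets_ge r x (w : seed r) (D : {set 'I_t}) :
  {in D &, injective w.1} -> {in D, forall j, lit x w (w.1 j)} ->
  #|D| <= #|lit_buckets x w|.
Proof.
move=> inj_D litD; rewrite -(card_in_imset inj_D); apply/subset_leq_card/subsetP.
by move=> b /imsetP [j jD ->]; rewrite inE litD.
Qed.

(* Fix a coordinate i of the bucket with x i = 1; the shift indexed by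
   c in {0,1}^r toggles i in the subsets A_s with c s = 1, flipping exactly
   those parities, so at most one shift of any seed leaves the bucket unlit. *)
Lemma miss_count r x j : j \in hit_sets x ->
  2 ^ r * \sum_(w : seed r) (~~ lit x w (w.1 j) : nat) <= #|seed r|.
Proof.
move=> hit_j.
pose one_of (h : {ffun 'I_t -> 'I_m}) := [pick i in bucket h (h j) | x i].
pose tau (c : {ffun 'I_r -> bool}) (w : seed r) : seed r :=
  (w.1, [ffun b => if b == w.1 j then
           [ffun s => if c s then oapp (toggle (w.2 b s)) (w.2 b s) (one_of w.1)
                      else w.2 b s]
         else w.2 b]).
have := @shift_count _ _ tau (fun w => ~~ lit x w (w.1 j)).
rewrite card_ffun card_bool card_ord; apply.
- move=> c; apply: inv_inj => -[h A]; congr (_, _); apply/ffunP => b.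
  rewrite !ffunE; case: (b == h j) => //; apply/ffunP => s; rewrite !ffunE.
  by case: (c s) => //; case: (one_of h) => //= i; rewrite toggleK.
- move=> [h A] c1 c2.
  have [i iU xi] : exists2 i, i \in bucket h (h j) & x i.
    move: hit_j; rewrite inE => /exists_inP [i iSj xi].
    by exists i => //; apply/bigcupP; exists j.
  rewrite /tau /lit /= /one_of; case: pickP => [i' /andP [i'U xi'] | /(_ i)];
    last by rewrite iU xi.
  rewrite !negb_exists => /forallP miss1 /forallP miss2; apply/ffunP => s.
  move: (miss1 s) (miss2 s); rewrite !ffunE eqxx !ffunE.
  by case: (c1 s); case: (c2 s); rewrite //= toggleI // chi_toggle //; case: (chi _ x).
Qed.

End Buckets.

Section Errors.
Variables (n t m' r d : nat) (S : 'I_t -> {set 'I_n}) (x : {ffun 'I_n -> bool}).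
Notation seed := (seed n t m'.+1 r).

Definition collisions (D : {set 'I_t}) (w : seed) : nat :=
  \sum_(j in D) \sum_(j' in D) ((j != j') && (w.1 j == w.1 j') : nat).

Definition misses (D : {set 'I_t}) (w : seed) : nat :=
  \sum_(j in D) (~~ lit S x w (w.1 j) : nat).

Lemma error_witness (D : {set 'I_t}) (w : seed) :
  #|D| = d.+1 -> #|lit_buckets S x w| <= d -> 0 < collisions D w + misses D w.
Proof.
move=> card_D; apply: contraTT; rewrite lt0n negbK addn_eq0 -ltnNge.
rewrite !sum_nat_eq0 => /andP [/forall_inP no_coll /forall_inP no_miss].
rewrite -card_D; apply: lit_buckets_ge => [j j' jD j'D eq_h | j jD].
- move: (no_coll j jD); rewrite sum_nat_eq0 => /forall_inP /(_ j' j'D).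
  by rewrite eq_h eqxx andbT eqb0 negbK => /eqP.
- by move: (no_miss j jD); rewrite eqb0 negbK.
Qed.

Lemma error_count :
  m'.+1 * 2 ^ r * \sum_(w : seed)
      ((d < #|lit_buckets S x w|) != (d < #|hit_sets S x|) : nat)
    <= (d.+1 ^ 2 * 2 ^ r + d.+1 * m'.+1) * #|seed|.
Proof.
have [few_hits | many_hits] := leqP #|hit_sets S x| d.
  rewrite big1 ?muln0 // => w _.
  by rewrite ltnNge (leq_trans (lit_buckets_le S x w) few_hits).
have [s [uniq_s size_s sub_s]] := card_geqP many_hits.
set D := [set j in s].
have card_D : #|D| = d.+1 by rewrite cardsE (card_uniqP uniq_s).
have err_le w : ((d < #|lit_buckets S x w|) != true : nat)
                  <= collisions D w + misses D w.
  by case: ltnP => //= lit_le; apply: error_witness.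
have coll_le : m'.+1 * \sum_w collisions D w <= d.+1 ^ 2 * #|seed|.
  rewrite /collisions exchange_big big_distrr /= -card_D -mulnA -sum_nat_const.
  apply: leq_sum => j jD; rewrite exchange_big big_distrr /= -sum_nat_const.
  apply: leq_sum => j' _; have [<- | neq_jj'] := eqVneq j j'.
    by rewrite big1 ?muln0 // => w _; rewrite eqxx.
  exact: collision_count.
have miss_le : 2 ^ r * \sum_w misses D w <= d.+1 * #|seed|.
  rewrite /misses exchange_big big_distrr /= -card_D -sum_nat_const.
  by apply: leq_sum => j; rewrite inE => /sub_s; apply: miss_count.
have err_sum : \sum_(w : seed) ((d < #|lit_buckets S x w|) != true : nat)
                 <= \sum_w collisions D w + \sum_w misses D w.
  rewrite -big_split; apply: leq_sum => w _; exact: err_le.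
move: err_sum coll_le miss_le.
set E := \sum_w _; set C := \sum_w _; set M := \sum_w _; set N := #|seed|.
move=> le_E le_C le_M.
apply: (@leq_trans (m'.+1 * 2 ^ r * (C + M))); first by rewrite leq_mul2l le_E orbT.
rewrite mulnDr mulnDl; apply: leq_add.
- by rewrite mulnAC [X in _ <= X]mulnAC leq_mul2r le_C orbT.
- by rewrite -mulnA mulnAC mulnC leq_mul2r le_M orbT.
Qed.

End Errors.

Lemma error_third n t m' r d (S : 'I_t -> {set 'I_n}) (x : {ffun 'I_n -> bool}) :
  6 * d.+1 ^ 2 <= m'.+1 -> 6 * d.+1 <= 2 ^ r ->
  3 * \sum_(w : seed n t m'.+1 r)
        ((d < #|lit_buckets S x w|) != (d < #|hit_sets S x|) : nat)
    <= #|seed n t m'.+1 r|.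
Proof.
move=> many_buckets many_parities; have := error_count m' r d S x.
set E := \sum_w _; set N := #|_|; set P := m'.+1 * 2 ^ r => le_E.
have le_coll : 6 * (d.+1 ^ 2 * 2 ^ r) <= P.
  by rewrite mulnA leq_mul2r many_buckets orbT.
have le_miss : 6 * (d.+1 * m'.+1) <= P.
  by rewrite /P mulnA mulnC leq_mul2l many_parities orbT.
have le_K : 3 * (d.+1 ^ 2 * 2 ^ r + d.+1 * m'.+1) <= P by lia.
rewrite -(@leq_pmul2l P) ?muln_gt0 ?expn_gt0 // mulnCA.
apply: leq_trans (leq_mul (leqnn 3) le_E) _.
by rewrite mulnA leq_mul2r le_K orbT.
Qed.

Lemma rsum_nat (T : finType) (G : T -> nat) :
  rsum (fun a => INR (G a)) = INR (\sum_a G a).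
Proof.
rewrite -big_enum /rsum; elim: (enum T) => [|a s IH]; first by rewrite big_nil.
by rewrite big_cons /= IH -plus_INR.
Qed.

Lemma rsum_mulr (T : finType) (F : T -> R) (c : R) :
  rsum (fun a => F a * c)%R = (rsum F * c)%R.
Proof. by rewrite /rsum; elim: (enum T) => [|a s IH] /=; [ring | rewrite IH; ring]. Qed.

Lemma rsum_le (T : finType) (F G : T -> R) :
  (forall a, F a <= G a)%R -> (rsum F <= rsum G)%R.
Proof.
move=> le_FG; rewrite /rsum; elim: (enum T) => [|a s IH] /=; first exact: Rle_refl.
exact: Rplus_le_compat.
Qed.

(* A uniformly random seed w, mapped to k subsets sk w, yields a sketch with
   error delta as soon as every x is certified correct (good x w) for a
   fraction 1 - delta of the seeds: the distribution on k-tuples is the image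
   of the uniform one. *)
Lemma lin_sketch_of_seeds n k (Seed : finType) (f : {ffun 'I_n -> bool} -> R)
    (delta : R) (sk : Seed -> k.-tuple {set 'I_n}) (g : {ffun 'I_k -> bool} -> R)
    (good : {ffun 'I_n -> bool} -> pred Seed) :
  0 < #|Seed| ->
  (forall x w, good x w -> g (sketch (sk w) x) = f x) ->
  (forall x, (1 - delta) * INR #|Seed| <= INR (\sum_w (good x w : nat)))%R ->
  lin_sketch f delta k.
Proof.
move=> Seed_gt0 good_correct many_good.
have N_gt0 : (0 < INR #|Seed|)%R by apply/lt_0_INR/ltP.
pose fiber (P : pred Seed) Ss := \sum_(w | P w && (sk w == Ss)) 1.
have sum_fibers P : \sum_Ss fiber P Ss = \sum_(w | P w) 1.
  by rewrite (partition_big sk xpredT).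
exists (fun Ss => INR (fiber xpredT Ss) * / INR #|Seed|)%R, g; split; [|split].
- move=> Ss; apply: Rmult_le_pos; first exact: pos_INR.
  exact/Rlt_le/Rinv_0_lt_compat.
- rewrite rsum_mulr rsum_nat sum_fibers sum1_card.
  exact/Rinv_r/Rgt_not_eq.
- move=> x; apply: (@Rle_trans _ (INR (\sum_Ss fiber (good x) Ss) * / INR #|Seed|)).
    have -> : \sum_Ss fiber (good x) Ss = \sum_w (good x w : nat).
      by rewrite sum_fibers big_mkcond; apply: eq_bigr => w _; case: (good x w).
    apply: (Rmult_le_reg_r (INR #|Seed|)) => //.
    by rewrite Rmult_assoc Rinv_l ?Rmult_1_r; [apply: many_good | apply: Rgt_not_eq].
  rewrite -rsum_nat -rsum_mulr; apply: rsum_le => Ss.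
  case: Req_EM_T => [agree | disagree].
  + apply: Rmult_le_compat_r; first exact/Rlt_le/Rinv_0_lt_compat.
    apply/le_INR/leP; rewrite /fiber big_mkcond [X in _ <= X]big_mkcond /=.
    by apply: leq_sum => w _; case: (good x w).
  + rewrite /fiber big_pred0 ?Rmult_0_l; first exact: Rle_refl.
    move=> w; apply/negbTE/negP => /andP [/good_correct w_good /eqP sk_w].
    by apply: disagree; rewrite -sk_w.
Qed.

Lemma thr_or_lin_sketch n t m r d (S : 'I_t -> {set 'I_n}) :
  6 * d.+1 ^ 2 <= m -> 6 * d.+1 <= 2 ^ r ->
  lin_sketch (thr_or d S) (1 / 3)%R (m * r).
Proof.
case: m => [|m'] many_buckets many_parities.
  by rewrite leqn0 muln_eq0 expn_eq0 in many_buckets.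
pose Pos : finType := ('I_m'.+1 * 'I_r)%type.
have <- : #|Pos| = m'.+1 * r by rewrite card_prod !card_ord.
pose sk (w : seed n t m'.+1 r) : #|Pos|.-tuple {set 'I_n} :=
  [tuple let: (b, s) := enum_val i in w.2 b s :&: bucket S w.1 b | i < #|Pos|].
pose g (z : {ffun 'I_#|Pos| -> bool}) : R :=
  if d.+1 <= #|[set b : 'I_m'.+1 | [exists s : 'I_r, z (enum_rank ((b, s) : Pos))]]|
  then 1%R else 0%R.
pose good x (w : seed n t m'.+1 r) :=
  (d < #|lit_buckets S x w|) == (d < #|hit_sets S x|).
apply: (@lin_sketch_of_seeds _ _ _ _ _ sk g good).
- by apply/card_gt0P; exists ([ffun=> ord0], [ffun=> [ffun=> set0]]).
- move=> x w /eqP same_answer; rewrite /g.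
  change (thr_or d S x) with (if d < #|hit_sets S x| then 1%R else 0%R).
  suff -> : [set b | [exists s, sketch (sk w) x (enum_rank ((b, s) : Pos))]]
              = lit_buckets S x w by rewrite same_answer.
  apply/setP => b; rewrite !inE; apply: eq_existsb => s.
  by rewrite ffunE tnth_mktuple enum_rankK.
- move=> x; have := error_third S x many_buckets many_parities.
  set N := #|seed n t m'.+1 r|; set E := \sum_w _ => le_E.
  have split_N : \sum_w (good x w : nat) + E = N.
    rewrite /E /N -big_split /= -[#|seed n t m'.+1 r|]sum1_card.
    by apply: eq_bigr => w _; rewrite /good; case: eqP.
  have /leP/le_INR : 2 * N <= 3 * \sum_w (good x w : nat) by lia.
  rewrite !mult_INR /=; lra.
Qed.

Lemma INR_expn (a k : nat) : INR (a ^ k) = (INR a ^ k)%R.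
Proof. by elim: k => [|k IH]; rewrite ?expn0 // expnS mulnE mult_INR IH. Qed.

Lemma ln_le_compat (a b : R) : (0 < a)%R -> (a <= b)%R -> (ln a <= ln b)%R.
Proof.
move=> a_gt0 [a_lt_b | ->]; last exact: Rle_refl.
exact/Rlt_le/ln_increasing.
Qed.

(* With 2^L <= d + 1 the size 6(d+1)^2 (L + 4) is at most 200 d^2 ln d:
   L ln 2 <= ln (d + 1) <= 2 ln d and ln 2 > 1/2 give L + 4 <= 12 ln d. *)
Lemma sketch_size_bound (d L : nat) : 2 <= d -> 2 ^ L <= d.+1 ->
  (INR (6 * d.+1 ^ 2 * (L + 4)) <= 200 * INR d ^ 2 * ln (INR d))%R.
Proof.
move=> d_ge2 pow_le.
have D_ge2 : (2 <= INR d)%R by apply/(le_INR 2)/leP.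
have ln2_gt := ln_lt_2.
have lnD_ge : (ln 2 <= ln (INR d))%R by apply: ln_le_compat; lra.
have L_ln2 : (INR L * ln 2 <= 2 * ln (INR d))%R.
  rewrite -ln_pow; last lra.
  have -> : (2 * ln (INR d) = ln (INR d ^ 2))%R by rewrite ln_pow /=; lra.
  apply: ln_le_compat; first by apply: pow_lt; lra.
  have /leP/le_INR : 2 ^ L <= d ^ 2 by apply: leq_trans pow_le _; nia.
  by rewrite !INR_expn.
have L_ge0 := pos_INR L.
have L4_le : (INR L + 4 <= 12 * ln (INR d))%R by nra.
have sq_le : ((INR d + 1) ^ 2 <= 9 / 4 * INR d ^ 2)%R by nra.
rewrite mulnE addnE !mult_INR plus_INR (S_INR d).
have -> : INR 6 = 6%R by rewrite /=; lra.
have -> : INR 4 = 4%R by rewrite /=; lra.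
nra.
Qed.

Theorem mainTheorem4 :
  exists C : R,
    forall (d n t : nat) (S : 'I_t -> {set 'I_n}),
      2 <= d ->
      Rlin_le (thr_or d S) (1 / 3)%R (C * (INR d ^ 2) * ln (INR d))%R.
Proof.
exists 200%R => d n t S d_ge2.
pose L := trunc_log 2 d.+1.
have pow_le : 2 ^ L <= d.+1 by apply: trunc_logP.
have lt_pow : d.+1 < 2 ^ L.+1 by apply: trunc_log_ltn.
exists (6 * d.+1 ^ 2 * (L + 4)); split; last exact: sketch_size_bound.
apply: thr_or_lin_sketch => //.
by move: lt_pow; rewrite expnS expnD; lia.
Qed.
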